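(* Assume $(d,q)=(2,2)$. The third-order term of the Taylor expansion of $f(\bm{x})$ around the mode $\bm{x}=\bm{\theta}$ is either: (i) $0$ identically, in which case the asymptotic bias (AB) is equal to zero with an arbitrary $\mathrm{Q}$; (ii) of the form $\prod_{i=1}^3\bm{a}_i^\top(\bm{x}-\bm{\theta})$ with $\bm{a}_1,\bm{a}_2,\bm{a}_3$, any two of which are linearly independent, in which case there is a choice of $\mathrm{Q}$ with which the AB is equal to zero; (iii) neither identically $0$ nor of the form described in (ii), in which case the AB cannot be made equal to zero by any choice of $\mathrm{Q}$.
   Context: Let $f$ be a probability density function on $\mathbb{R}^d$ with unique mode $\bm{\theta}$ and non-singular Hessian $Hf(\bm{\theta})$, and let $\mathrm{A}=\{Hf(\bm{\theta})\}^{-1}$. The kernel mode estimator $\bm{\theta}_n$ (maximizer of a kernel density estimate with bandwidth $h_n$) uses an elliptic kernel $K_\mathrm{P}(\bm{x})=K(\mathrm{P}\bm{x})$, where $K(\cdot)=G(\|\cdot\|)$ is a $q$-th order radial-basis kernel and $\mathrm{P}$ is a $d\times d$ matrix with $|\det\mathrm{P}|=1$; let $\mathrm{Q}=\mathrm{P}^{-1}\mathrm{P}^{-\top}$ (positive definite). The asymptotic bias (AB) of $\bm{\theta}_n$ is $\mathrm{E}[\bm{\theta}_n-\bm{\theta}]\approx -\frac{\pi^{d/2}h_n^q}{2^{q-1}\Gamma(\frac{d+q}{2})\Gamma(\frac{q}{2}+1)}B_{d,q}(G)\,\mathrm{A}\,\nabla(\nabla^\top\mathrm{Q}\nabla)^{q/2}f(\bm{\theta})$,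 with $B_{d,q}(G)=\int_0^\infty x^{d-1+q}G(x)\,dx\neq 0$, so the AB vanishes iff $\nabla(\nabla^\top\mathrm{Q}\nabla)^{q/2}f(\bm{\theta})=\bm{0}_d$. *)

From HB Require Import structures.
From mathcomp Require Import all_boot all_order all_algebra.
From mathcomp Require Import all_classical all_reals all_analysis.
Set Implicit Arguments. Unset Strict Implicit. Unset Printing Implicit Defensive.
Import Order.TTheory GRing.Theory Num.Theory.
Import numFieldNormedType.Exports.
Local Open Scope ring_scope.

Definition evec (R : realType) (i : 'I_2) : 'rV[R]_2 := delta_mx 0 i.

Definition D3 (R : realType) (f : 'rV[R]_2 -> R) (th : 'rV[R]_2)
  (i j k : 'I_2) : R :=
  'D_(evec R i) ('D_(evec R j) ('D_(evec R k) f)) th.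

Definition taylor3 (R : realType) (f : 'rV[R]_2 -> R) (th x : 'rV[R]_2) : R :=
  (6%:R)^-1 * \sum_(i < 2) \sum_(j < 2) \sum_(k < 2)
     D3 f th i j k * (x - th) 0 i * (x - th) 0 j * (x - th) 0 k.

Definition admissibleQ (R : realType) (Q : 'M[R]_2) : Prop :=
  exists P : 'M[R]_2, `|\det P| = 1 /\ Q = invmx P *m (invmx P)^T.

(* The asymptotic bias vanishes iff  grad (grad^T Q grad)^{q/2} f (th) = 0;
   for q = 2 the k-th component is  sum_{i,j} Q_ij d_k d_i d_j f (th). *)
Definition AB_zero (R : realType) (f : 'rV[R]_2 -> R) (th : 'rV[R]_2)
  (Q : 'M[R]_2) : Prop :=
  forall k : 'I_2, \sum_(i < 2) \sum_(j < 2) Q i j * D3 f th k i j = 0.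

Definition lin (R : realType) (a v : 'rV[R]_2) : R := \sum_(i < 2) a 0 i * v 0 i.

Definition lin_indep2 (R : realType) (a b : 'rV[R]_2) : Prop :=
  row_free (col_mx a b).

Definition case_i (R : realType) (f : 'rV[R]_2 -> R) (th : 'rV[R]_2) : Prop :=
  forall x, taylor3 f th x = 0.

Definition case_ii (R : realType) (f : 'rV[R]_2 -> R) (th : 'rV[R]_2) : Prop :=
  exists a1 a2 a3 : 'rV[R]_2,
    [/\ lin_indep2 a1 a2, lin_indep2 a1 a3, lin_indep2 a2 a3 &
        forall x, taylor3 f th x = lin a1 (x - th) * lin a2 (x - th) * lin a3 (x - th)].

(* Write the third-order Taylor term as C(v) / 6, where
   C(v) = a v0^3 + 3 b v0^2 v1 + 3 c v0 v1^2 + d v1^3 with a = d_000 f(th), ...,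
   d = d_111 f(th).  The bias vanishes for Q exactly when Q is apolar to C (the
   Q-Laplacian sum_ij Q_ij d_i d_j C is zero), and the admissible Q are the Gram
   matrices M M^T with |det M| = 1.
   If M M^T is apolar to C, then w |-> C(w M^T) is harmonic, i.e. of the form
   Re (conj z (w0 + i w1)^3); a complex cube root of z writes it as
   u^3 - 3 u v^2 = u (u - sqrt 3 v) (u + sqrt 3 v) for independent linear forms
   u, v, so C is either zero or a product of three pairwise independent linear
   forms.  Conversely, if C = l1 l2 l3 with pairwise independent l_k, the
   positive definite form sum_k (l_i x l_j)^2 l_k^perp (l_k^perp)^T is apolar
   to C, and rescaling it to determinant one makes it admissible. *)

From HB Require Import structures.
From mathcomp Require Import all_boot all_order all_algebra.
From mathcomp Require Import all_classical all_reals all_analysis.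
From mathcomp Require Import complex ring lra.
Set Implicit Arguments.
Unset Strict Implicit.
Unset Printing Implicit Defensive.

Import Order.TTheory GRing.Theory Num.Theory.
Import numFieldNormedType.Exports.
Local Open Scope ring_scope.

Lemma ord2_cases (i : 'I_2) : i = 0 \/ i = 1.
Proof. by case: i => [[|[|//]]] ?; [left | right]; apply: val_inj. Qed.

Lemma sum_ord2 (V : nmodType) (F : 'I_2 -> V) : \sum_(i < 2) F i = F 0 + F 1.
Proof. by rewrite big_ord_recl big_ord1; congr (_ + F _); apply: val_inj. Qed.

Lemma det_mx2 (R : comPzRingType) (M : 'M[R]_2) :
  \det M = M 0 0 * M 1 1 - M 0 1 * M 1 0.
Proof.
rewrite (expand_det_row _ 0) sum_ord2 /cofactor !det_mx11 !mxE /=.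
have -> : lift 0 0 = 1 :> 'I_2 by apply: val_inj.
have -> : lift 1 0 = 0 :> 'I_2 by apply: val_inj.
by rewrite expr0 expr1 mul1r mulN1r mulrN.
Qed.

Lemma mulmx_trE (R : comPzRingType) (M : 'M[R]_2) (i j : 'I_2) :
  (M *m M^T) i j = M i 0 * M j 0 + M i 1 * M j 1.
Proof. by rewrite mxE sum_ord2 !mxE. Qed.

Lemma admissibleQ_gram (R : realType) (Q : 'M[R]_2) :
  admissibleQ Q <-> exists2 M : 'M[R]_2, `|\det M| = 1 & Q = M *m M^T.
Proof.
have inv_unimodular (P : 'M[R]_2) :
    `|\det P| = 1 -> P \in unitmx /\ `|\det (invmx P)| = 1.
  move=> detP; have detP0 : \det P != 0 by rewrite -normr_eq0 detP oner_eq0.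
  by rewrite unitmxE unitfE det_inv normrV ?unitfE // detP invr1.
split=> [[P [/inv_unimodular[_ detP'] ->]] | [M /inv_unimodular[unitM detM'] ->]].
  by exists (invmx P).
by exists (invmx M); rewrite invmxK.
Qed.

Definition vec2 (R : pzRingType) (s t : R) : 'rV[R]_2 :=
  \row_(j < 2) if j == 0 then s else t.

Definition cross2 (R : pzRingType) (p q : 'rV[R]_2) : R := p 0 0 * q 0 1 - p 0 1 * q 0 0.

Definition perp (R : pzRingType) (p : 'rV[R]_2) : 'rV[R]_2 := vec2 (p 0 1) (- p 0 0).

Lemma complex_cube_root (R : rcfType) (A B : R) :
  exists x y : R, x ^+ 3 - 3 * x * y ^+ 2 = A /\ 3 * x ^+ 2 * y - y ^+ 3 = B.
Proof.
have := @rootCK R[i] 3 isT (A +i* B)%C.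
case: (3.-root _) => x y; rewrite !exprS expr0 mulr1 => -[<- <-].
by exists x, y; split; ring.
Qed.

Lemma posdef_gram (R : rcfType) (Q : 'M[R]_2) :
  Q 0 1 = Q 1 0 -> 0 < Q 0 0 -> 0 < \det Q ->
  exists2 k : R, 0 < k & exists2 M : 'M[R]_2, \det M = 1 & M *m M^T = k *: Q.
Proof.
move=> Qsym Q00 detQ; pose k := (Num.sqrt (\det Q))^-1.
have k0 : 0 < k by rewrite invr_gt0 sqrtr_gt0.
have kdet : k ^+ 2 * \det Q = 1.
  by rewrite exprVn sqr_sqrtr ?ltW // mulVf ?gt_eqF.
pose t := Num.sqrt (k * Q 0 0).
have t2 : t ^+ 2 = k * Q 0 0 by rewrite sqr_sqrtr // ltW // mulr_gt0.
have t0 : t != 0 by rewrite gt_eqF // sqrtr_gt0 mulr_gt0.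
(* The Cholesky factor of k Q, which has determinant 1. *)
exists k => //; exists (\matrix_(i, j) if i == 0 then (if j == 0 then t else 0)
                                    else (if j == 0 then k * Q 0 1 / t else t^-1)).
  by rewrite det_mx2 !mxE /= mul0r subr0 mulfV.
move: kdet; rewrite det_mx2 -Qsym => kdet.
apply/matrixP => i j; rewrite mulmx_trE !mxE.
have [-> | ->] := ord2_cases i; have [-> | ->] := ord2_cases j => /=.
- by rewrite mul0r addr0 -expr2 t2.
- by rewrite mul0r addr0 mulrCA mulfV ?mulr1.
- by rewrite mulr0 addr0 divfK // Qsym.
transitivity ((k ^+ 2 * Q 0 1 ^+ 2 + 1) / t ^+ 2); first by field.
by rewrite t2 -kdet; field; rewrite !gt_eqF.
Qed.

Section LinearForms.
Variable R : realType.
Implicit Types (p q v : 'rV[R]_2) (N : 'M[R]_2).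

Lemma linE p v : lin p v = p 0 0 * v 0 0 + p 0 1 * v 0 1.
Proof. exact: sum_ord2. Qed.

Lemma lin_mulmx p v N : lin p (v *m N) = lin (p *m N^T) v.
Proof. by rewrite !linE !mxE !sum_ord2 !mxE; ring. Qed.

Lemma lin_indep2E p q : lin_indep2 p q <-> cross2 p q != 0.
Proof.
have colE j : col_mx p q 0 j = p 0 j /\ col_mx p q 1 j = q 0 j.
  have -> : 0 = lshift 1 (0 : 'I_1) by apply: val_inj.
  have -> : 1 = rshift 1 (0 : 'I_1) by apply: val_inj.
  by rewrite col_mxEu col_mxEd.
rewrite /lin_indep2 row_free_unit unitmxE unitfE det_mx2.
by rewrite !(colE 0).1 !(colE 1).1 !(colE 0).2 !(colE 1).2.
Qed.

Lemma lin_indep2_mulmx p q N :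
  N \in unitmx -> lin_indep2 p q -> lin_indep2 (p *m N) (q *m N).
Proof. by rewrite /lin_indep2 -mul_col_mx !row_free_unit unitmx_mul => -> ->. Qed.

Definition split3 (C : 'rV[R]_2 -> R) : Prop :=
  exists p1 p2 p3 : 'rV[R]_2,
    [/\ lin_indep2 p1 p2, lin_indep2 p1 p3, lin_indep2 p2 p3 &
        forall v, C v = lin p1 v * lin p2 v * lin p3 v].

Lemma split3Z (k : R) (C C' : 'rV[R]_2 -> R) :
  k != 0 -> (forall v, C' v = k * C v) -> split3 C -> split3 C'.
Proof.
move=> k0 eqC [p1 [p2 [p3 [i12 i13 i23 eqp]]]].
have indepZ p q : lin_indep2 p q -> lin_indep2 (k *: p) q.
  move=> /lin_indep2E ipq; apply/lin_indep2E.
  have -> : cross2 (k *: p) q = k * cross2 p q by rewrite /cross2 !mxE; ring.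
  exact: mulf_neq0.
exists (k *: p1), p2, p3; split => [||//|v]; try exact: indepZ.
by rewrite eqC eqp !linE !mxE; ring.
Qed.

Lemma split3_comp (N : 'M[R]_2) (C C' : 'rV[R]_2 -> R) :
  N \in unitmx -> (forall v, C' v = C (v *m N)) -> split3 C -> split3 C'.
Proof.
rewrite -unitmx_tr => unitN eqC [p1 [p2 [p3 [i12 i13 i23 eqp]]]].
exists (p1 *m N^T), (p2 *m N^T), (p3 *m N^T).
split; try exact: lin_indep2_mulmx.
by move=> v; rewrite eqC eqp !lin_mulmx.
Qed.

Lemma depressed_split3 (u v : 'rV[R]_2) (C : 'rV[R]_2 -> R) :
  lin_indep2 u v -> (forall w, C w = lin u w ^+ 3 - 3 * lin u w * lin v w ^+ 2) ->
  split3 C.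
Proof.
move=> /lin_indep2E iuv eqC; pose s := Num.sqrt (3 : R).
have s0 : s != 0 by rewrite gt_eqF // sqrtr_gt0.
have s2 : s ^+ 2 = 3 by rewrite sqr_sqrtr // ler0n.
exists u, (u - s *: v), (u + s *: v); split; try apply/lin_indep2E.
- have -> : cross2 u (u - s *: v) = - s * cross2 u v by rewrite /cross2 !mxE; ring.
  by rewrite mulf_neq0 ?oppr_eq0.
- have -> : cross2 u (u + s *: v) = s * cross2 u v by rewrite /cross2 !mxE; ring.
  exact: mulf_neq0.
- have -> : cross2 (u - s *: v) (u + s *: v) = 2 * s * cross2 u v.
    by rewrite /cross2 !mxE; ring.
  by rewrite !mulf_neq0 ?pnatr_eq0.
by move=> w; rewrite eqC !linE !mxE -s2; ring.
Qed.

End LinearForms.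

Section BinaryCubics.
Variable R : realType.
Implicit Types (a b c d : R) (v w : 'rV[R]_2) (Q M : 'M[R]_2).

Definition cubic a b c d v : R :=
  a * v 0 0 ^+ 3 + 3 * b * v 0 0 ^+ 2 * v 0 1 + 3 * c * v 0 0 * v 0 1 ^+ 2
  + d * v 0 1 ^+ 3.

Definition apolar a b c d Q : Prop :=
  Q 0 0 * a + (Q 0 1 + Q 1 0) * b + Q 1 1 * c = 0 /\
  Q 0 0 * b + (Q 0 1 + Q 1 0) * c + Q 1 1 * d = 0.

Lemma cubic_inj a b c d a' b' c' d' :
  (forall v, cubic a b c d v = cubic a' b' c' d' v) ->
  [/\ a = a', b = b', c = c' & d = d'].
Proof.
move=> eqC; have := eqC (vec2 1 0); have := eqC (vec2 0 1).
have := eqC (vec2 1 1); have := eqC (vec2 1 (-1)).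
by rewrite /cubic !mxE /= => *; split; lra.
Qed.

Lemma lin_mul3 (p q r : 'rV[R]_2) v :
  lin p v * lin q v * lin r v =
  cubic (p 0 0 * q 0 0 * r 0 0)
        ((p 0 0 * q 0 0 * r 0 1 + p 0 0 * q 0 1 * r 0 0 + p 0 1 * q 0 0 * r 0 0) / 3)
        ((p 0 0 * q 0 1 * r 0 1 + p 0 1 * q 0 0 * r 0 1 + p 0 1 * q 0 1 * r 0 0) / 3)
        (p 0 1 * q 0 1 * r 0 1) v.
Proof. by rewrite !linE /cubic; field. Qed.

Lemma apolarZ a b c d k Q : apolar a b c d Q -> apolar a b c d (k *: Q).
Proof. by rewrite /apolar !mxE => -[E0 E1]; rewrite -mulrDr -!mulrA -!mulrDr E0 E1 mulr0. Qed.

Lemma cubic_eq0_apolar a b c d Q :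
  (forall v, cubic a b c d v = 0) -> apolar a b c d Q.
Proof.
move=> C0; have [-> -> -> ->] : [/\ a = 0, b = 0, c = 0 & d = 0].
  by apply: cubic_inj => v; rewrite C0 /cubic; ring.
by rewrite /apolar !mulr0 !addr0.
Qed.

Lemma split3_apolar a b c d : split3 (cubic a b c d) ->
  exists Q, [/\ Q 0 1 = Q 1 0, 0 < Q 0 0, 0 < \det Q & apolar a b c d Q].
Proof.
move=> [p [q [r [/lin_indep2E ipq /lin_indep2E ipr /lin_indep2E iqr eqC]]]].
have [-> -> -> ->] := cubic_inj (fun v => etrans (eqC v) (lin_mul3 p q r v)).
exists (cross2 q r ^+ 2 *: ((perp p)^T *m perp p)
      + cross2 r p ^+ 2 *: ((perp q)^T *m perp q)
      + cross2 p q ^+ 2 *: ((perp r)^T *m perp r)).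
set Q := _ + _ + _.
have QE i j : Q i j = cross2 q r ^+ 2 * (perp p 0 i * perp p 0 j)
    + cross2 r p ^+ 2 * (perp q 0 i * perp q 0 j)
    + cross2 p q ^+ 2 * (perp r 0 i * perp r 0 j).
  by rewrite !mxE !big_ord1 !mxE.
have Qsym : Q 0 1 = Q 1 0 by rewrite !QE; ring.
have detQ : \det Q = 3 * (cross2 p q * cross2 q r * cross2 r p) ^+ 2.
  by rewrite det_mx2 !QE !mxE /= /cross2; ring.
have detQ_gt0 : 0 < \det Q.
  rewrite detQ.
  have -> : cross2 r p = - cross2 p r by rewrite /cross2; ring.
  by rewrite mulr_gt0 // exprn_even_gt0 //= !mulf_neq0 ?oppr_eq0.
split=> //.
- rewrite lt_def; apply/andP; split.
    apply: contraTneq detQ_gt0 => Q00; rewrite det_mx2 Q00 mul0r sub0r Qsym.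
    by rewrite oppr_gt0 -leNgt -expr2 sqr_ge0.
  rewrite QE !mxE /= -!expr2.
  by do !apply: addr_ge0; rewrite mulr_ge0 ?sqr_ge0.
by rewrite /apolar !QE !mxE /= /cross2; split; field.
Qed.

Lemma apolar_gram_harmonic a b c d M : apolar a b c d (M *m M^T) ->
  exists A B, forall w, cubic a b c d (w *m M^T) = cubic A B (- A) (- B) w.
Proof.
rewrite /apolar !mulmx_trE.
set e0 := (_ * a + _ * b + _ * c); set e1 := (_ * b + _ * c + _ * d) => -[E0 E1].
(* A and B are the first two coefficients of w |-> C (w M^T); apolarity forces
   the last two to be - A and - B. *)
pose A := cubic a b c d (vec2 (M 0 0) (M 1 0)).
pose B := a * M 0 0 ^+ 2 * M 0 1 + b * (M 0 0 ^+ 2 * M 1 1 + 2 * M 0 0 * M 1 0 * M 0 1)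
  + c * (M 1 0 ^+ 2 * M 0 1 + 2 * M 0 0 * M 1 0 * M 1 1) + d * M 1 0 ^+ 2 * M 1 1.
exists A, B => w.
transitivity (cubic A B (- A) (- B) w
  + (3 * w 0 0 * w 0 1 ^+ 2 * M 0 0 + w 0 1 ^+ 3 * M 0 1) * e0
  + (3 * w 0 0 * w 0 1 ^+ 2 * M 1 0 + w 0 1 ^+ 3 * M 1 1) * e1).
  by rewrite /A /B /e0 /e1 /cubic !mxE !sum_ord2 !mxE /=; ring.
by rewrite E0 E1 !mulr0 !addr0.
Qed.

Lemma harmonic_split3 A B : (A, B) != (0, 0) -> split3 (cubic A B (- A) (- B)).
Proof.
move=> AB0; have [x [y [xA yB]]] := complex_cube_root A B.
(* With (x + i y)^3 = A + i B the cubic is Re (((x - i y) (w0 + i w1))^3). *)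
apply: (@depressed_split3 _ (vec2 x y) (vec2 (- y) x)).
  apply/lin_indep2E; apply: contra_neq AB0; rewrite /cross2.
  rewrite !mxE /= mulrN opprK -!expr2 => /eqP; rewrite paddr_eq0 ?sqr_ge0 // !sqrf_eq0.
  by case/andP => /eqP x0 /eqP y0; rewrite -xA -yB x0 y0; congr (_, _); ring.
by move=> w; rewrite /cubic !linE !mxE /= -xA -yB; ring.
Qed.

End BinaryCubics.

Section SymmetricTensor.
Variables (R : realType) (T : 'I_2 -> 'I_2 -> 'I_2 -> R).
Hypothesis T_perm : forall i j k, T i j k = T j i k /\ T i j k = T i k j.

Lemma tensor_sym2 :
  [/\ T 0 1 0 = T 0 0 1, T 1 0 0 = T 0 0 1, T 1 0 1 = T 0 1 1 & T 1 1 0 = T 0 1 1].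
Proof.
have [e001 e010] := T_perm 0 0 1; have [e010' _] := T_perm 0 1 0.
have [e011 _] := T_perm 0 1 1; have [_ e101] := T_perm 1 0 1.
by split; congruence.
Qed.

Lemma tensor_cubicE (v : 'rV[R]_2) :
  \sum_(i < 2) \sum_(j < 2) \sum_(k < 2) T i j k * v 0 i * v 0 j * v 0 k =
  cubic (T 0 0 0) (T 0 0 1) (T 0 1 1) (T 1 1 1) v.
Proof.
have [e010 e100 e101 e110] := tensor_sym2.
by rewrite /cubic !sum_ord2 e010 e100 e101 e110; ring.
Qed.

Lemma tensor_apolarE (Q : 'M[R]_2) :
  (forall k, \sum_(i < 2) \sum_(j < 2) Q i j * T k i j = 0) <->
  apolar (T 0 0 0) (T 0 0 1) (T 0 1 1) (T 1 1 1) Q.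
Proof.
have [_ e100 e101 _] := tensor_sym2.
have lapE k : \sum_(i < 2) \sum_(j < 2) Q i j * T k i j =
    Q 0 0 * T k 0 0 + (Q 0 1 + Q 1 0) * T k 0 1 + Q 1 1 * T k 1 1.
  by rewrite !sum_ord2 (T_perm k 1 0).2; ring.
rewrite /apolar; split=> [AB0 | [E0 E1] k].
  by have := AB0 0; have := AB0 1; rewrite !lapE e100 e101.
by have [-> | ->] := ord2_cases k; rewrite lapE ?e100 ?e101.
Qed.

End SymmetricTensor.

Section TaylorCubic.
Variables (R : realType) (f : 'rV[R]_2 -> R) (th : 'rV[R]_2).
Hypothesis D3_perm : forall i j k : 'I_2,
  D3 f th i j k = D3 f th j i k /\ D3 f th i j k = D3 f th i k j.

Local Notation a := (D3 f th 0 0 0).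
Local Notation b := (D3 f th 0 0 1).
Local Notation c := (D3 f th 0 1 1).
Local Notation d := (D3 f th 1 1 1).
Local Notation C := (cubic a b c d).

Lemma taylor3E x : taylor3 f th x = 6^-1 * C (x - th).
Proof. by rewrite /taylor3 tensor_cubicE. Qed.

Lemma AB_zeroE Q : AB_zero f th Q <-> apolar a b c d Q.
Proof. exact: tensor_apolarE. Qed.

Lemma case_iE : case_i f th <-> forall v, C v = 0.
Proof.
split=> C0 v; last by rewrite taylor3E C0 mulr0.
have /eqP := C0 (th + v); rewrite taylor3E (addrC th v) addrK.
by rewrite mulf_eq0 invr_eq0 pnatr_eq0 => /eqP.
Qed.

Lemma case_iiE : case_ii f th <-> split3 C.
Proof.
have six0 : (6 : R) != 0 by rewrite pnatr_eq0.
split=> [[p1 [p2 [p3 [i12 i13 i23 eqT]]]] | splitC].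
  apply: (split3Z (C := fun v => 6^-1 * C v) six0).
    by move=> v; rewrite mulrA mulfV ?mul1r.
  exists p1, p2, p3; split=> // v.
  by have := eqT (th + v); rewrite taylor3E (addrC th v) addrK.
have [p1 [p2 [p3 [i12 i13 i23 eqT]]]] :=
  split3Z (C' := fun v => 6^-1 * C v) (invr_neq0 six0) (fun v => erefl) splitC.
by exists p1, p2, p3; split=> // x; rewrite taylor3E eqT.
Qed.

Lemma case_i_AB_zero : case_i f th -> forall Q, AB_zero f th Q.
Proof.
by move=> /case_iE C0 Q; apply/AB_zeroE; apply: cubic_eq0_apolar.
Qed.

Lemma case_ii_AB_zero : case_ii f th -> exists Q, admissibleQ Q /\ AB_zero f th Q.
Proof.
move=> /case_iiE /split3_apolar[Q [Qsym Q00 detQ apolarQ]].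
have [k _ [M detM MQ]] := posdef_gram Qsym Q00 detQ.
exists (M *m M^T); split; first by apply/admissibleQ_gram; exists M; rewrite ?detM ?normr1.
by apply/AB_zeroE; rewrite MQ; exact: apolarZ.
Qed.

Lemma AB_zero_case_i_or_ii Q :
  admissibleQ Q -> AB_zero f th Q -> case_i f th \/ case_ii f th.
Proof.
move=> /admissibleQ_gram[M detM ->] /AB_zeroE /apolar_gram_harmonic[A [B eqH]].
have unitM : M^T \in unitmx by rewrite unitmx_tr unitmxE unitfE -normr_eq0 detM oner_eq0.
have eqC v : C v = cubic A B (- A) (- B) (v *m invmx M^T) by rewrite -eqH mulmxKV.
have [AB0 | AB0] := eqVneq (A, B) (0, 0).
  left; apply/case_iE => v; rewrite eqC; case: AB0 => -> ->.
  by rewrite /cubic; ring.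
by right; apply/case_iiE; apply: (split3_comp _ eqC (harmonic_split3 AB0)); rewrite unitmx_inv.
Qed.

End TaylorCubic.

Theorem proposition6 (R : realType) (f : 'rV[R]_2 -> R) (th : 'rV[R]_2)
  (Hsym : forall i j k : 'I_2,
     D3 f th i j k = D3 f th j i k /\ D3 f th i j k = D3 f th i k j) :
  (case_i f th -> forall Q, admissibleQ Q -> AB_zero f th Q) /\
  (case_ii f th -> exists Q, admissibleQ Q /\ AB_zero f th Q) /\
  (~ case_i f th -> ~ case_ii f th -> forall Q, admissibleQ Q -> ~ AB_zero f th Q).
Proof.
split; first by move=> /(case_i_AB_zero Hsym) AB0 Q _.
split; first exact: case_ii_AB_zero.
by move=> ni nii Q /(AB_zero_case_i_or_ii Hsym) AB /AB[].
Qed.
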